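(* For any $(2^{nR_1},2^{nR_2},n)$ code (with deterministic feedback encoders $x_{ki}=\phi_{ki}(w_k,z_k^{i-1})$) for the state-dependent discrete memoryless MAC with generalized feedback, with independent messages $W_1,W_2$, letting $Z_i=(Z_{1i},Z_{2i})$ and $Z^{i-1}=(Z_1,\dots,Z_{i-1})$, $$\sum_{i=1}^nI(X_{1i};X_{2i}\mid Z^{i-1})\le\sum_{i=1}^nI(X_{1i};X_{2i}\mid Z_i,Z^{i-1}).$$
   Context: Model: finite alphabets; states $S_i$ i.i.d. $\sim P_S$ independent of the messages; memoryless channel $P_{YZ_1Z_2|X_1X_2S}$ producing $(Y_i,Z_{1i},Z_{2i})$ from $(X_{1i},X_{2i},S_i)$; encoder $k$ maps its message $w_k$ and its past feedback $z_k^{i-1}=(z_{k1},\dots,z_{k,i-1})$ to $x_{ki}$. *)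

From HB Require Import structures.
From mathcomp Require Import all_boot.
From Stdlib Require Import Reals.

Set Implicit Arguments.
Unset Strict Implicit.
Unset Printing Implicit Defensive.

Lemma Rplus_assoc' : associative Rplus.
Proof. by move=> x y z; rewrite Rplus_assoc. Qed.
Lemma Rmult_assoc' : associative Rmult.
Proof. by move=> x y z; rewrite Rmult_assoc. Qed.
HB.instance Definition _ := Monoid.isComLaw.Build R R0 Rplus Rplus_assoc' Rplus_comm Rplus_0_l.
HB.instance Definition _ := Monoid.isComLaw.Build R R1 Rmult Rmult_assoc' Rmult_comm Rmult_1_l.

Definition Rsum (T : finType) (f : T -> R) : R := \big[Rplus/R0]_(x : T) f x.

Definition log2 (x : R) : R := (ln x / ln 2)%R.

Definition pmfRV (Om A : finType) (p : Om -> R) (X : Om -> A) (a : A) : R :=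
  \big[Rplus/R0]_(w : Om | X w == a) p w.

(* Conditional mutual information I(X;Y|Z) (in bits), with 0 log 0 = 0. *)
Definition condMI (Om A B C : finType) (p : Om -> R)
    (X : Om -> A) (Y : Om -> B) (Z : Om -> C) : R :=
  Rsum (fun a : A => Rsum (fun b : B => Rsum (fun c : C =>
    let pabc := pmfRV p (fun w => (X w, Y w, Z w)) (a, b, c) in
    let pac := pmfRV p (fun w => (X w, Z w)) (a, c) in
    let pbc := pmfRV p (fun w => (Y w, Z w)) (b, c) in
    let pc := pmfRV p Z c in
    if Rlt_dec R0 pabc then (pabc * log2 (pabc * pc / (pac * pbc)))%R
    else R0))).

(* Sample space of a length-n code: messages (w1,w2) and, for each time i,
   the tuple (S_i, Y_i, Z_{1i}, Z_{2i}). *)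
Definition traj (n : nat) (S Y Z1 Z2 : finType) :=
  {ffun 'I_n -> S * Y * Z1 * Z2}.
Definition omega (M1 M2 n : nat) (S Y Z1 Z2 : finType) :=
  ('I_M1 * 'I_M2 * traj n S Y Z1 Z2)%type.

(* z_1^{i-1} and z_2^{i-1}: feedback strictly before time i (0-indexed). *)
Definition past1 (n : nat) (S Y Z1 Z2 : finType) (t : traj n S Y Z1 Z2)
    (i : 'I_n) : seq Z1 :=
  map (fun j : 'I_n => (t j).1.2) (filter (fun j : 'I_n => (j < i)%N) (enum 'I_n)).
Definition past2 (n : nat) (S Y Z1 Z2 : finType) (t : traj n S Y Z1 Z2)
    (i : 'I_n) : seq Z2 :=
  map (fun j : 'I_n => (t j).2) (filter (fun j : 'I_n => (j < i)%N) (enum 'I_n)).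

Definition xin1 (M1 M2 n : nat) (S Y Z1 Z2 X1 : finType)
    (phi1 : 'I_n -> 'I_M1 -> seq Z1 -> X1)
    (o : omega M1 M2 n S Y Z1 Z2) (i : 'I_n) : X1 :=
  phi1 i o.1.1 (past1 o.2 i).
Definition xin2 (M1 M2 n : nat) (S Y Z1 Z2 X2 : finType)
    (phi2 : 'I_n -> 'I_M2 -> seq Z2 -> X2)
    (o : omega M1 M2 n S Y Z1 Z2) (i : 'I_n) : X2 :=
  phi2 i o.1.2 (past2 o.2 i).

(* Joint pmf induced by the code: independent uniform messages, i.i.d. states
   independent of messages, memoryless channel
   W y z1 z2 x1 x2 s = P_{Y Z1 Z2 | X1 X2 S}(y,z1,z2 | x1,x2,s). *)
Definition codePmf (M1 M2 n : nat) (S Y Z1 Z2 X1 X2 : finType)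
    (PS : S -> R) (W : X1 -> X2 -> S -> Y -> Z1 -> Z2 -> R)
    (phi1 : 'I_n -> 'I_M1 -> seq Z1 -> X1)
    (phi2 : 'I_n -> 'I_M2 -> seq Z2 -> X2)
    (o : omega M1 M2 n S Y Z1 Z2) : R :=
  (/ INR M1 * / INR M2 *
   \big[Rmult/R1]_(i : 'I_n)
     (PS (o.2 i).1.1.1 *
      W (xin1 phi1 o i) (xin2 phi2 o i) (o.2 i).1.1.1
        (o.2 i).1.1.2 (o.2 i).1.2 (o.2 i).2))%R.

Definition Zat (M1 M2 n : nat) (S Y Z1 Z2 : finType) (i : 'I_n)
    (o : omega M1 M2 n S Y Z1 Z2) : Z1 * Z2 :=
  ((o.2 i).1.2, (o.2 i).2).

Definition Zpast (M1 M2 n : nat) (S Y Z1 Z2 : finType) (i : 'I_n)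
    (o : omega M1 M2 n S Y Z1 Z2) : {ffun 'I_n -> option (Z1 * Z2)} :=
  [ffun j : 'I_n => if (j < i)%N then Some (Zat j o) else None].

From HB Require Import structures.
From mathcomp Require Import all_boot.
From Stdlib Require Import Reals Lra.

Set Implicit Arguments.
Unset Strict Implicit.
Unset Printing Implicit Defensive.

(* Let G_k = I(W_1;W_2 | Z^k).  The messages are independent, so G_0 = 0, and
   G_n >= 0.  At time i the channel makes Z_i depend on the past only through
   (X_1i, X_2i), hence H(Z_i | W_1, W_2, Z^{i-1}) = H(Z_i | X_1i, X_2i, Z^{i-1});
   and X_ki is a function of (W_k, Z^{i-1}), so conditioning reduces entropy:
   H(Z_i | W_k, Z^{i-1}) <= H(Z_i | X_ki, Z^{i-1}).  Expanding the four
   conditional mutual informations with these two facts gives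
     G_{i+1} - G_i <= I(X_1i; X_2i | Z_i, Z^{i-1}) - I(X_1i; X_2i | Z^{i-1}),
   and summing over i the left-hand side telescopes to G_n - G_0 >= 0. *)

Lemma Rmult_0_l' : left_zero R0 Rmult. Proof. exact: Rmult_0_l. Qed.
Lemma Rmult_0_r' : right_zero R0 Rmult. Proof. exact: Rmult_0_r. Qed.
HB.instance Definition _ := Monoid.isMulLaw.Build R R0 Rmult Rmult_0_l' Rmult_0_r'.
Lemma Rmult_plus_distr_r' : left_distributive Rmult Rplus.
Proof. exact: Rmult_plus_distr_r. Qed.
Lemma Rmult_plus_distr_l' : right_distributive Rmult Rplus.
Proof. exact: Rmult_plus_distr_l. Qed.
HB.instance Definition _ :=
  Monoid.isAddLaw.Build R Rmult Rplus Rmult_plus_distr_r' Rmult_plus_distr_l'.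

Open Scope R_scope.

Section RealSums.
Variable I : finType.
Implicit Types (P Q : pred I) (F G : I -> R).

Lemma sumR_le P F G :
  (forall i, P i -> F i <= G i) ->
  \big[Rplus/R0]_(i | P i) F i <= \big[Rplus/R0]_(i | P i) G i.
Proof.
move=> FG; apply: (big_ind2 (fun x y => x <= y)) => //; first lra.
by move=> *; lra.
Qed.

Lemma sumR_ge0 P F :
  (forall i, P i -> 0 <= F i) -> 0 <= \big[Rplus/R0]_(i | P i) F i.
Proof.
move=> F0; apply: (big_ind (fun x => 0 <= x)) => //; first lra.
by move=> *; lra.
Qed.

Lemma sumR_sub P F G :
  \big[Rplus/R0]_(i | P i) (F i - G i) =
  \big[Rplus/R0]_(i | P i) F i - \big[Rplus/R0]_(i | P i) G i.
Proof.
rewrite /Rminus big_split /=; congr (_ + _).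
by rewrite (big_morph Ropp Ropp_plus_distr Ropp_0).
Qed.

Lemma sumR_le_subpred P Q F :
  (forall i, P i -> Q i) -> (forall i, 0 <= F i) ->
  \big[Rplus/R0]_(i | P i) F i <= \big[Rplus/R0]_(i | Q i) F i.
Proof.
move=> PQ F0; rewrite (big_mkcond P) (big_mkcond Q); apply: sumR_le => i _.
by case: (boolP (P i)) => [/PQ -> | _]; [lra | case: (Q i); [exact: F0 | lra]].
Qed.

Lemma sumR_const P c : \big[Rplus/R0]_(i | P i) c = INR #|P| * c.
Proof.
rewrite (eq_bigl (mem P)) // big_const; elim: #|_| => [|k IH]; first by rewrite Rmult_0_l.
by rewrite iterS IH S_INR; ring.
Qed.

Lemma prodR_ge0 P F :
  (forall i, 0 <= F i) -> 0 <= \big[Rmult/R1]_(i | P i) F i.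
Proof.
move=> F0; apply: (big_ind (fun x => 0 <= x)); [lra | exact: Rmult_le_pos | by []].
Qed.

End RealSums.

Lemma sumR_pair (I J : finType) (F : I * J -> R) :
  \big[Rplus/R0]_(v : I * J) F v =
  \big[Rplus/R0]_(i : I) \big[Rplus/R0]_(j : J) F (i, j).
Proof. by rewrite pair_big; apply: eq_bigr => -[]. Qed.

Lemma ln_ge_1_sub_inv x : 0 < x -> 1 - / x <= ln x.
Proof.
move=> x0; have := exp_ineq1_le (ln (/ x)).
rewrite exp_ln; last exact: Rinv_0_lt_compat.
rewrite ln_Rinv //; lra.
Qed.

Lemma ln2_gt0 : 0 < ln 2.
Proof. by rewrite -ln_1; apply: ln_increasing; lra. Qed.

Lemma Rinv_ge0 x : 0 <= x -> 0 <= / x.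
Proof.
case=> [x0 | <-]; last by rewrite Rinv_0; lra.
by left; apply: Rinv_0_lt_compat.
Qed.

Lemma sumR_telescope (G : nat -> R) m :
  \big[Rplus/R0]_(i < m) (G i.+1 - G i) = G m - G 0%nat.
Proof.
elim: m => [|m IH]; first by rewrite big_ord0; ring.
by rewrite big_ord_recr /= IH; ring.
Qed.

Lemma xlog2_div_ge (x y : R) : 0 < x -> 0 < y -> (x - y) / ln 2 <= x * log2 (x / y).
Proof.
move=> x0 y0; have l2 := ln2_gt0; have xy0 : 0 < x / y by apply: Rdiv_lt_0_compat.
have := ln_ge_1_sub_inv xy0; rewrite /log2 Rinv_div => lnxy.
have -> : (x - y) / ln 2 = x * ((1 - y / x) / ln 2) by field; lra.
apply: Rmult_le_compat_l; first lra.
by apply: Rmult_le_compat_r; [left; apply: Rinv_0_lt_compat | ].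
Qed.

Section FiniteProbability.
Variables (Om : finType) (p : Om -> R).
Hypothesis p_ge0 : forall w, 0 <= p w.

Lemma pmfRV_ge0 (A : finType) (U : Om -> A) a : 0 <= pmfRV p U a.
Proof. by apply: sumR_ge0. Qed.

Lemma pmfRV_le (A B : finType) (U : Om -> A) (V : Om -> B) u v :
  (forall w, U w = u -> V w = v) -> pmfRV p U u <= pmfRV p V v.
Proof. by move=> UV; apply: sumR_le_subpred => // w /eqP/UV ->. Qed.

Lemma pmfRV_gt0 (A : finType) (U : Om -> A) w : 0 < p w -> 0 < pmfRV p U (U w).
Proof.
have -> : p w = pmfRV p (@id Om) w by rewrite /pmfRV big_pred1_eq.
by move=> pw; apply: Rlt_le_trans pw _; apply: pmfRV_le => w' ->.
Qed.

Lemma sum_pmfRV_mul (A : finType) (U : Om -> A) (h : A -> R) :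
  \big[Rplus/R0]_(a : A) (pmfRV p U a * h a) = \big[Rplus/R0]_(w : Om) (p w * h (U w)).
Proof.
rewrite (partition_big U xpredT) //; apply: eq_bigr => a _.
by rewrite /pmfRV big_distrl; apply: eq_bigr => w /eqP <-.
Qed.

Lemma sum_pmfRV_fst (A C : finType) (X : Om -> A) (Z : Om -> C) c :
  \big[Rplus/R0]_(a : A) pmfRV p (fun w => (X w, Z w)) (a, c) = pmfRV p Z c.
Proof.
rewrite /pmfRV (partition_big X xpredT) //; apply: eq_bigr => a _.
by apply: eq_bigl => w; rewrite xpair_eqE andbC.
Qed.

Definition negentropy (A : finType) (U : Om -> A) : R :=
  \big[Rplus/R0]_(w : Om) (p w * ln (pmfRV p U (U w))).

Definition cmi (A B C : finType) (X : Om -> A) (Y : Om -> B) (Z : Om -> C) : R :=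
  negentropy (fun w => (X w, Y w, Z w)) + negentropy Z
  - negentropy (fun w => (X w, Z w)) - negentropy (fun w => (Y w, Z w)).

Lemma negentropy_eq (A B : finType) (U : Om -> A) (V : Om -> B) :
  (forall w w', U w = U w' <-> V w = V w') -> negentropy U = negentropy V.
Proof.
move=> UV; apply: eq_bigr => w _; congr (_ * ln _).
by apply: eq_bigl => w'; apply/eqP/eqP => /UV.
Qed.

Lemma negentropy_swap (A D P : finType) (U : Om -> A) (Dv : Om -> D) (Pv : Om -> P) :
  negentropy (fun w => (U w, (Dv w, Pv w))) = negentropy (fun w => (U w, Pv w, Dv w)).
Proof. by apply: negentropy_eq => w w'; split=> ?; congruence. Qed.

Lemma cmi_eq_cond (A B C C' : finType) (X : Om -> A) (Y : Om -> B)
    (Z : Om -> C) (Z' : Om -> C') :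
  (forall w w', Z w = Z w' <-> Z' w = Z' w') -> cmi X Y Z = cmi X Y Z'.
Proof.
move=> ZZ'.
have pairZ (T : finType) (V : Om -> T) :
    negentropy (fun w => (V w, Z w)) = negentropy (fun w => (V w, Z' w)).
  apply: negentropy_eq => w w'.
  by split=> -[-> eZ]; congr pair; apply/ZZ'.
by rewrite /cmi (negentropy_eq ZZ') (pairZ _ (fun w => (X w, Y w))) pairZ pairZ.
Qed.

Section ConditionalMutualInformation.
Variables (A B C : finType) (X : Om -> A) (Y : Om -> B) (Z : Om -> C).

Local Notation pXYZ := (pmfRV p (fun w => (X w, Y w, Z w))).
Local Notation pXZ := (pmfRV p (fun w => (X w, Z w))).
Local Notation pYZ := (pmfRV p (fun w => (Y w, Z w))).
Local Notation pZ := (pmfRV p Z).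

Lemma sum_pmfRV_cond_indep_gap c :
  \big[Rplus/R0]_(a : A) \big[Rplus/R0]_(b : B)
    (pXYZ (a, b, c) - pXZ (a, c) * pYZ (b, c) / pZ c) = 0.
Proof.
have mass : \big[Rplus/R0]_(a : A) \big[Rplus/R0]_(b : B) pXYZ (a, b, c) = pZ c.
  by rewrite -(sum_pmfRV_fst (fun w => (X w, Y w))) sumR_pair.
have prod_mass : \big[Rplus/R0]_(a : A) \big[Rplus/R0]_(b : B)
    (pXZ (a, c) * pYZ (b, c) / pZ c) = pZ c * pZ c / pZ c.
  transitivity (\big[Rplus/R0]_(a : A)
                  (pXZ (a, c) * \big[Rplus/R0]_(b : B) pYZ (b, c) / pZ c)).
    by apply: eq_bigr => a _; rewrite /Rdiv big_distrr big_distrl.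
  by rewrite sum_pmfRV_fst /Rdiv -!big_distrl sum_pmfRV_fst.
under eq_bigr do rewrite sumR_sub.
rewrite sumR_sub mass prod_mass.
by case: (Req_dec (pZ c) 0) => [-> | ?]; [rewrite /Rdiv; ring | field].
Qed.

Lemma condMI_summand_ge a b c :
  (pXYZ (a, b, c) - pXZ (a, c) * pYZ (b, c) / pZ c) / ln 2 <=
  (if Rlt_dec 0 (pXYZ (a, b, c))
   then pXYZ (a, b, c) * log2 (pXYZ (a, b, c) * pZ c / (pXZ (a, c) * pYZ (b, c)))
   else 0).
Proof.
have XZ_ge : pXYZ (a, b, c) <= pXZ (a, c) by apply: pmfRV_le => w [-> _ ->].
have YZ_ge : pXYZ (a, b, c) <= pYZ (b, c) by apply: pmfRV_le => w [_ -> ->].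
have Z_ge : pXYZ (a, b, c) <= pZ c by apply: pmfRV_le => w [_ _ ->].
case: Rlt_dec => [pos | nonpos] /=.
  have -> : pXYZ (a, b, c) * pZ c / (pXZ (a, c) * pYZ (b, c)) =
            pXYZ (a, b, c) / (pXZ (a, c) * pYZ (b, c) / pZ c) by field; lra.
  apply: xlog2_div_ge => //; apply: Rdiv_lt_0_compat; last lra.
  by apply: Rmult_lt_0_compat; lra.
have : 0 <= pXZ (a, c) * pYZ (b, c) / pZ c.
  by apply: Rmult_le_pos; [apply: Rmult_le_pos | apply: Rinv_ge0]; apply: pmfRV_ge0.
have := pmfRV_ge0 (fun w => (X w, Y w, Z w)) (a, b, c).
have := Rinv_0_lt_compat _ ln2_gt0; rewrite /Rdiv; nra.
Qed.

Lemma condMI_ge0 : 0 <= condMI p X Y Z.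
Proof.
apply: (Rle_trans _ (\big[Rplus/R0]_(a : A) \big[Rplus/R0]_(b : B) \big[Rplus/R0]_(c : C)
  ((pXYZ (a, b, c) - pXZ (a, c) * pYZ (b, c) / pZ c) / ln 2))).
  under eq_bigr do rewrite exchange_big /=.
  rewrite exchange_big big1 => [|c _]; first exact: Rle_refl.
  transitivity ((\big[Rplus/R0]_(a : A) \big[Rplus/R0]_(b : B)
                   (pXYZ (a, b, c) - pXZ (a, c) * pYZ (b, c) / pZ c)) / ln 2).
    by rewrite /Rdiv big_distrl; apply: eq_bigr => a _; rewrite big_distrl.
  by rewrite sum_pmfRV_cond_indep_gap /Rdiv Rmult_0_l.
by do 3![apply: sumR_le => ? _]; apply: condMI_summand_ge.
Qed.

Lemma condMI_cmi : condMI p X Y Z = cmi X Y Z / ln 2.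
Proof.
pose h (v : A * B * C) :=
  log2 (pXYZ v * pZ v.2 / (pXZ (v.1.1, v.2) * pYZ (v.1.2, v.2))).
transitivity (\big[Rplus/R0]_(v : A * B * C) (pXYZ v * h v)).
  rewrite /condMI /Rsum !sumR_pair.
  apply: eq_bigr => a _; apply: eq_bigr => b _; apply: eq_bigr => c _.
  case: Rlt_dec => //= nonpos.
  suff -> : pXYZ (a, b, c) = 0 by rewrite Rmult_0_l.
  by have := pmfRV_ge0 (fun w => (X w, Y w, Z w)) (a, b, c); lra.
rewrite sum_pmfRV_mul /cmi /negentropy -big_split -!sumR_sub /Rdiv big_distrl.
apply: eq_bigr => w _ /=.
have [pw | <-] := p_ge0 w; last by ring.
have /= := pmfRV_gt0 (fun w => (X w, Y w, Z w)) pw; have := pmfRV_gt0 Z pw.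
have /= := pmfRV_gt0 (fun w => (X w, Z w)) pw.
have /= := pmfRV_gt0 (fun w => (Y w, Z w)) pw.
rewrite /h /log2 /= => pYZ_gt0 pXZ_gt0 pZ_gt0 pXYZ_gt0.
have pXZYZ_gt0 := Rmult_lt_0_compat _ _ pXZ_gt0 pYZ_gt0.
rewrite /Rdiv ln_mult ?ln_Rinv ?ln_mult //; last exact: Rinv_0_lt_compat.
  by ring.
exact: Rmult_lt_0_compat.
Qed.

Lemma condMI_empty : (Om -> False) -> condMI p X Y Z = 0.
Proof.
move=> void; rewrite /condMI /Rsum.
apply: big1 => a _; apply: big1 => b _; apply: big1 => c _.
have -> : pXYZ (a, b, c) = 0 by apply: big1 => w; case: (void w).
by case: Rlt_dec => // lt00; case: (Rlt_irrefl _ lt00).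
Qed.

End ConditionalMutualInformation.

Lemma cmi_ge0 (A B C : finType) (X : Om -> A) (Y : Om -> B) (Z : Om -> C) :
  0 <= cmi X Y Z.
Proof.
have := condMI_ge0 X Y Z; rewrite condMI_cmi => ge0.
have -> : cmi X Y Z = cmi X Y Z / ln 2 * ln 2 by field; have := ln2_gt0; lra.
by apply: Rmult_le_pos => //; have := ln2_gt0; lra.
Qed.

Lemma negentropy_markov (A D : finType) (U : Om -> A) (Dv : Om -> D) (q : Om -> D -> R) :
  (forall w d, pmfRV p (fun w => (U w, Dv w)) (U w, d) = pmfRV p U (U w) * q w d) ->
  negentropy (fun w => (U w, Dv w)) =
  negentropy U + \big[Rplus/R0]_(w : Om) (p w * ln (q w (Dv w))).
Proof.
move=> factor; rewrite /negentropy -big_split; apply: eq_bigr => w _ /=.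
have [pw | <-] := p_ge0 w; last by ring.
have /= := pmfRV_gt0 (fun w => (U w, Dv w)) pw; have := pmfRV_gt0 U pw.
rewrite factor => Upos UDpos.
have qpos : 0 < q w (Dv w) by nra.
by rewrite ln_mult //; ring.
Qed.

Lemma negentropy_cond_le (A B D : finType) (U : Om -> A) (V : Om -> B) (Dv : Om -> D) :
  (forall w w', U w = U w' -> V w = V w') ->
  negentropy (fun w => (V w, Dv w)) - negentropy V <=
  negentropy (fun w => (U w, Dv w)) - negentropy U.
Proof.
move=> UV; have := cmi_ge0 U Dv V; rewrite /cmi.
have -> : negentropy (fun w => (U w, Dv w, V w)) = negentropy (fun w => (U w, Dv w)).
  apply: negentropy_eq => w w'; split=> [[-> ->] // | [eU eD]].
  by rewrite eD (UV _ _ eU) eU.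
have -> : negentropy (fun w => (U w, V w)) = negentropy U.
  apply: negentropy_eq => w w'; split=> [[] // | eU].
  by rewrite (UV _ _ eU) eU.
have -> : negentropy (fun w => (Dv w, V w)) = negentropy (fun w => (V w, Dv w)).
  by apply: negentropy_eq => w w'; split=> ?; congruence.
lra.
Qed.

(* U_k play the messages, V_k the channel inputs, Pv the past and Dv the
   current feedback. *)
Lemma cmi_step_le (A1 A2 B1 B2 P D : finType) (U1 : Om -> A1) (U2 : Om -> A2)
    (V1 : Om -> B1) (V2 : Om -> B2) (Pv : Om -> P) (Dv : Om -> D) (q : Om -> D -> R) :
  (forall w w', U1 w = U1 w' -> Pv w = Pv w' -> V1 w = V1 w') ->
  (forall w w', U2 w = U2 w' -> Pv w = Pv w' -> V2 w = V2 w') ->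
  (forall w d, pmfRV p (fun w => (U1 w, U2 w, Pv w, Dv w)) (U1 w, U2 w, Pv w, d) =
     pmfRV p (fun w => (U1 w, U2 w, Pv w)) (U1 w, U2 w, Pv w) * q w d) ->
  (forall w d, pmfRV p (fun w => (V1 w, V2 w, Pv w, Dv w)) (V1 w, V2 w, Pv w, d) =
     pmfRV p (fun w => (V1 w, V2 w, Pv w)) (V1 w, V2 w, Pv w) * q w d) ->
  cmi U1 U2 (fun w => (Dv w, Pv w)) - cmi U1 U2 Pv <=
  cmi V1 V2 (fun w => (Dv w, Pv w)) - cmi V1 V2 Pv.
Proof.
move=> fV1 fV2 mU mV.
have f1 w w' : (U1 w, Pv w) = (U1 w', Pv w') -> (V1 w, Pv w) = (V1 w', Pv w').
  by case=> eU eP; rewrite (fV1 _ _ eU eP) eP.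
have f2 w w' : (U2 w, Pv w) = (U2 w', Pv w') -> (V2 w, Pv w) = (V2 w', Pv w').
  by case=> eU eP; rewrite (fV2 _ _ eU eP) eP.
have /= := negentropy_cond_le Dv f1; have /= := negentropy_cond_le Dv f2.
rewrite /cmi !negentropy_swap.
rewrite (@negentropy_markov _ _ (fun w => (U1 w, U2 w, Pv w)) Dv q mU).
rewrite (@negentropy_markov _ _ (fun w => (V1 w, V2 w, Pv w)) Dv q mV).
set E := \big[Rplus/R0]_(w : Om) _; lra.
Qed.

Lemma cmi_eq0 (A B C : finType) (X : Om -> A) (Y : Om -> B) (Z : Om -> C) :
  (forall w, 0 < p w ->
     pmfRV p (fun w => (X w, Y w, Z w)) (X w, Y w, Z w) * pmfRV p Z (Z w) =
     pmfRV p (fun w => (X w, Z w)) (X w, Z w) *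
     pmfRV p (fun w => (Y w, Z w)) (Y w, Z w)) ->
  cmi X Y Z = 0.
Proof.
move=> indep; rewrite /cmi /negentropy -big_split -!sumR_sub big1 // => w _ /=.
have [pw | <-] := p_ge0 w; last by ring.
have /= := pmfRV_gt0 (fun w => (X w, Y w, Z w)) pw; have := pmfRV_gt0 Z pw.
have /= := pmfRV_gt0 (fun w => (X w, Z w)) pw.
have /= := pmfRV_gt0 (fun w => (Y w, Z w)) pw.
move=> ? ? ? ?; have := f_equal ln (indep w pw); rewrite !ln_mult // => e.
transitivity (p w * ((ln (pmfRV p (fun w => (X w, Y w, Z w)) (X w, Y w, Z w)) +
  ln (pmfRV p Z (Z w))) - (ln (pmfRV p (fun w => (X w, Z w)) (X w, Z w)) +
  ln (pmfRV p (fun w => (Y w, Z w)) (Y w, Z w))))); first by ring.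
by rewrite e; ring.
Qed.

End FiniteProbability.

Lemma prodR_ltS (n : nat) (k : 'I_n) (F : 'I_n -> R) :
  \big[Rmult/R1]_(j : 'I_n | (j < k.+1)%nat) F j =
  F k * \big[Rmult/R1]_(j : 'I_n | (j < k)%nat) F j.
Proof.
rewrite (bigD1 k) //=; congr (_ * _); apply: eq_bigl => j.
by rewrite ltnS ltn_neqAle andbC; congr (_ && _); rewrite -val_eqE.
Qed.

Section CodeModel.
Variables (M1 M2 n : nat) (S Y Z1 Z2 X1 X2 : finType).
Variables (PS : S -> R) (W : X1 -> X2 -> S -> Y -> Z1 -> Z2 -> R).
Variables (phi1 : 'I_n -> 'I_M1 -> seq Z1 -> X1) (phi2 : 'I_n -> 'I_M2 -> seq Z2 -> X2).
Hypothesis PS_ge0 : forall s, 0 <= PS s.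
Hypothesis PS_sum1 : Rsum PS = 1.
Hypothesis W_ge0 : forall x1 x2 s y z1 z2, 0 <= W x1 x2 s y z1 z2.
Hypothesis W_sum1 : forall x1 x2 s,
  Rsum (fun yz : Y * Z1 * Z2 => W x1 x2 s yz.1.1 yz.1.2 yz.2) = 1.

Local Notation V := (S * Y * Z1 * Z2)%type.
Local Notation trj := (traj n S Y Z1 Z2).
Local Notation Om := (omega M1 M2 n S Y Z1 Z2).
Local Notation p := (codePmf PS W phi1 phi2).

Definition msg_mass : R := / INR M1 * / INR M2.

Definition channel_step (j : 'I_n) (a : 'I_M1) (b : 'I_M2) (t : trj) : R :=
  PS (t j).1.1.1 * W (phi1 j a (past1 t j)) (phi2 j b (past2 t j))
    (t j).1.1.1 (t j).1.1.2 (t j).1.2 (t j).2.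

Lemma codePmfE a b t :
  p ((a, b), t) = msg_mass * \big[Rmult/R1]_(j : 'I_n) channel_step j a b t.
Proof. by []. Qed.

Lemma msg_mass_ge0 : 0 <= msg_mass.
Proof. by apply: Rmult_le_pos; apply/Rinv_ge0/pos_INR. Qed.

Lemma codePmf_ge0 (o : Om) : 0 <= p o.
Proof.
case: o => -[a b] t; rewrite codePmfE; apply: Rmult_le_pos; first exact: msg_mass_ge0.
by apply: prodR_ge0 => j; apply: Rmult_le_pos.
Qed.

Definition eq_upto (k : nat) (t t' : trj) := forall l : 'I_n, (l < k)%nat -> t l = t' l.

Lemma eq_upto_le k k' t t' : (k' <= k)%nat -> eq_upto k t t' -> eq_upto k' t t'.
Proof. by move=> le_k'k tt' l lt_lk'; apply: tt'; apply: leq_trans le_k'k. Qed.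

Lemma past1_eq_upto (j : 'I_n) t t' : eq_upto j t t' -> past1 t j = past1 t' j.
Proof. by move=> tt'; apply/eq_in_map => l; rewrite mem_filter => /andP[/tt' ->]. Qed.

Lemma past2_eq_upto (j : 'I_n) t t' : eq_upto j t t' -> past2 t j = past2 t' j.
Proof. by move=> tt'; apply/eq_in_map => l; rewrite mem_filter => /andP[/tt' ->]. Qed.

Lemma channel_step_eq_upto (j : 'I_n) a b t t' :
  eq_upto j.+1 t t' -> channel_step j a b t = channel_step j a b t'.
Proof.
move=> tt'; have tt'j := eq_upto_le (leqnSn j) tt'.
by rewrite /channel_step (past1_eq_upto tt'j) (past2_eq_upto tt'j) (tt' j).
Qed.

Definition tset (t : trj) (k : 'I_n) (v : V) : trj :=
  [ffun l => if l == k then v else t l].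

Lemma tset_at t k v : tset t k v k = v.
Proof. by rewrite ffunE eqxx. Qed.

Lemma tset_tset t k v v' : tset (tset t k v) k v' = tset t k v'.
Proof. by apply/ffunP => l; rewrite !ffunE; case: eqP. Qed.

Lemma tset_eq t k v : (tset t k v == t) = (t k == v).
Proof.
apply/eqP/eqP => [<- | <-]; first by rewrite tset_at.
by apply/ffunP => l; rewrite ffunE; case: eqP => // ->.
Qed.

Lemma tset_eq_upto t (k : 'I_n) v m : (m <= k)%nat -> eq_upto m (tset t k v) t.
Proof.
move=> le_mk l lt_lm; rewrite ffunE; case: eqP => // lk.
by move: lt_lm; rewrite lk ltnNge le_mk.
Qed.

Lemma channel_step_tset (j : 'I_n) a b t v :
  channel_step j a b (tset t j v) =
  PS v.1.1.1 * W (phi1 j a (past1 t j)) (phi2 j b (past2 t j))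
    v.1.1.1 v.1.1.2 v.1.2 v.2.
Proof.
have tt' := tset_eq_upto t v (leqnn j).
by rewrite /channel_step (past1_eq_upto tt') (past2_eq_upto tt') tset_at.
Qed.

Lemma sum_channel_step (j : 'I_n) a b t :
  \big[Rplus/R0]_(v : V) channel_step j a b (tset t j v) = 1.
Proof.
under eq_bigr do rewrite channel_step_tset.
rewrite !sumR_pair -PS_sum1; apply: eq_bigr => s _.
rewrite -[RHS]Rmult_1_r -(W_sum1 (phi1 j a (past1 t j)) (phi2 j b (past2 t j)) s).
rewrite /Rsum !sumR_pair big_distrr; apply: eq_bigr => y _.
rewrite big_distrr; apply: eq_bigr => z1 _.
by rewrite big_distrr.
Qed.

Lemma sum_tset (k : 'I_n) v0 (Q : pred trj) (H : trj -> R) :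
  (forall t v, Q (tset t k v) = Q t) ->
  \big[Rplus/R0]_(t | Q t) H t =
  \big[Rplus/R0]_(t | Q t && (t k == v0)) \big[Rplus/R0]_(v : V) H (tset t k v).
Proof.
move=> Qtset; rewrite (partition_big (fun t : trj => t k) xpredT) //= exchange_big /=.
apply: eq_bigr => v _.
rewrite (reindex_onto (fun t => tset t k v) (fun t => tset t k v0)) /=.
  by apply: eq_bigl => t; rewrite Qtset tset_at eqxx andbT tset_tset tset_eq.
by move=> t /andP[_ /eqP <-]; rewrite tset_tset; apply/eqP; rewrite tset_eq.
Qed.

Section Marginalization.
Variables (v0 : V) (a : 'I_M1) (b : 'I_M2).

(* [v0] is a dummy value for the coordinates that have been summed out. *)

Definition fixed_from (k : nat) (t : trj) : bool :=
  [forall l : 'I_n, (k <= l)%nat ==> (t l == v0)].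

Lemma fixed_from_tset k (j : 'I_n) t v :
  (j < k)%nat -> fixed_from k (tset t j v) = fixed_from k t.
Proof.
move=> lt_jk; apply: eq_forallb => l; rewrite ffunE.
by case: (l =P j) => // ->; rewrite leqNgt lt_jk.
Qed.

Lemma fixed_fromE (j : 'I_n) t : fixed_from j t = fixed_from j.+1 t && (t j == v0).
Proof.
apply/forallP/andP => [fix_t | [/forallP fix_t tj] l].
  split; last by have := fix_t j; rewrite leqnn.
  by apply/forallP => l; apply/implyP => lt_jl; have := fix_t l; rewrite ltnW.
apply/implyP; rewrite leq_eqVlt => /orP[/eqP/val_inj <- // | lt_jl].
by have := fix_t l; rewrite lt_jl.
Qed.

Lemma fixed_from0 t : fixed_from 0 t = (t == [ffun=> v0]).
Proof.
apply/forallP/eqP => [fix_t | ->] /=; last by move=> l; rewrite ffunE eqxx.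
by apply/ffunP => l; rewrite ffunE; apply/eqP; apply: fix_t.
Qed.

Lemma sum_fixed_peel (j : 'I_n) (g : trj -> R) (phi : V -> R) :
  (forall t t', eq_upto j t t' -> g t = g t') ->
  \big[Rplus/R0]_(t | fixed_from j.+1 t)
     (g t * phi (t j) * \big[Rmult/R1]_(l : 'I_n | (l < j.+1)%nat) channel_step l a b t) =
  \big[Rplus/R0]_(t | fixed_from j t)
     (g t * \big[Rmult/R1]_(l : 'I_n | (l < j)%nat) channel_step l a b t *
      \big[Rplus/R0]_(v : V) (phi v * channel_step j a b (tset t j v))).
Proof.
move=> g_prefix; rewrite (@sum_tset j v0); last by move=> t v; apply: fixed_from_tset.
apply: eq_big => [t | t _]; first by rewrite fixed_fromE.
rewrite big_distrr; apply: eq_bigr => v _ /=.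
rewrite prodR_ltS tset_at (g_prefix _ t); last exact: tset_eq_upto.
have -> : \big[Rmult/R1]_(l : 'I_n | (l < j)%nat) channel_step l a b (tset t j v) =
          \big[Rmult/R1]_(l : 'I_n | (l < j)%nat) channel_step l a b t.
  by apply: eq_bigr => l lt_lj; apply: channel_step_eq_upto; apply: tset_eq_upto.
by set P := \big[Rmult/R1]_(l : 'I_n | (l < j)%nat) _; ring.
Qed.

Lemma sum_marginalize k (g : trj -> R) : (k <= n)%nat ->
  (forall t t', eq_upto k t t' -> g t = g t') ->
  \big[Rplus/R0]_(t : trj) (g t * \big[Rmult/R1]_(j : 'I_n) channel_step j a b t) =
  \big[Rplus/R0]_(t | fixed_from k t)
     (g t * \big[Rmult/R1]_(j : 'I_n | (j < k)%nat) channel_step j a b t).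
Proof.
move=> /subnKC; move: (n - k)%nat => m; elim: m k g => [|m IH] k g.
  rewrite addn0 => -> _; apply: eq_big => [t | t _].
    by symmetry; apply/forallP => l; rewrite leqNgt ltn_ord.
  by congr (_ * _); apply: eq_bigl => j; rewrite ltn_ord.
move=> km g_prefix; have lt_kn : (k < n)%nat by rewrite -km -addSnnS leq_addr.
rewrite (IH k.+1) ?addSnnS //; last first.
  by move=> t t' tt'; apply: g_prefix; apply: eq_upto_le tt'.
have := @sum_fixed_peel (Ordinal lt_kn) g (fun _ => 1) g_prefix; rewrite /= => peel.
under eq_bigr do rewrite -[g _]Rmult_1_r.
rewrite peel; apply: eq_bigr => t _; rewrite -[RHS]Rmult_1_r; congr (_ * _).
rewrite -[RHS](sum_channel_step (Ordinal lt_kn) a b t).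
by apply: eq_bigr => v _; rewrite Rmult_1_l.
Qed.

End Marginalization.

(* [Zpast] with a natural-number index, so that [Zprefix n] is the whole feedback. *)
Definition Zprefix (k : nat) (o : Om) : {ffun 'I_n -> option (Z1 * Z2)} :=
  [ffun j : 'I_n => if (j < k)%nat then Some (Zat j o) else None].

Lemma Zprefix_eq_upto k a b t t' :
  eq_upto k t t' -> Zprefix k ((a, b), t) = Zprefix k ((a, b), t').
Proof.
move=> tt'; apply/ffunP => j; rewrite !ffunE.
by case: (boolP (j < k)%nat) => // /tt' tj; rewrite /Zat /= tj.
Qed.

Lemma Zprefix_Zat k o o' (j : 'I_n) :
  Zprefix k o = Zprefix k o' -> (j < k)%nat -> Zat j o = Zat j o'.
Proof. by move=> /ffunP/(_ j); rewrite !ffunE => + jk; rewrite jk => /Some_inj. Qed.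

Lemma ZprefixS (i : 'I_n) o o' :
  Zprefix i.+1 o = Zprefix i.+1 o' <-> (Zat i o, Zprefix i o) = (Zat i o', Zprefix i o').
Proof.
split=> [e | /pair_equal_spec [ei /ffunP e]].
  rewrite (Zprefix_Zat e (ltnSn i)); congr pair; apply/ffunP => j; rewrite !ffunE.
  by case: ifP => // ji; rewrite (Zprefix_Zat e) // ltnS ltnW.
apply/ffunP => j; rewrite !ffunE ltnS leq_eqVlt.
case: eqP => [/val_inj -> | _] /=; first by rewrite ei.
by have := e j; rewrite !ffunE.
Qed.

Lemma xin1_det (i : 'I_n) o o' :
  o.1.1 = o'.1.1 -> Zprefix i o = Zprefix i o' -> xin1 phi1 o i = xin1 phi1 o' i.
Proof.
rewrite /xin1 /past1 => -> e; congr phi1; apply/eq_in_map => j.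
by rewrite mem_filter => /andP[/(Zprefix_Zat e) [-> _] _].
Qed.

Lemma xin2_det (i : 'I_n) o o' :
  o.1.2 = o'.1.2 -> Zprefix i o = Zprefix i o' -> xin2 phi2 o i = xin2 phi2 o' i.
Proof.
rewrite /xin2 /past2 => -> e; congr phi2; apply/eq_in_map => j.
by rewrite mem_filter => /andP[/(Zprefix_Zat e) [_ ->] _].
Qed.

Definition feedback_law (x1 : X1) (x2 : X2) (d : Z1 * Z2) : R :=
  \big[Rplus/R0]_(v : V | (v.1.2, v.2) == d) (PS v.1.1.1 * W x1 x2 v.1.1.1 v.1.1.2 v.1.2 v.2).

Lemma pmfRV_codeE (T : finType) (U : Om -> T) u :
  pmfRV p U u = \big[Rplus/R0]_(ab : 'I_M1 * 'I_M2) (msg_mass * \big[Rplus/R0]_(t : trj)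
    ((if U (ab, t) == u then 1 else 0) * \big[Rmult/R1]_(j : 'I_n) channel_step j ab.1 ab.2 t)).
Proof.
rewrite /pmfRV big_mkcond sumR_pair; apply: eq_bigr => -[a b] _; rewrite big_distrr.
apply: eq_bigr => t _ /=; rewrite codePmfE.
by case: ifP => _; rewrite ?Rmult_1_l ?Rmult_0_l ?Rmult_0_r.
Qed.

Lemma pmfRV_feedback_markov (v0 : V) (i : 'I_n) (T : finType) (U : Om -> T) :
  (forall a b t t', eq_upto i t t' -> U ((a, b), t) = U ((a, b), t')) ->
  (forall o o', U o = U o' ->
     xin1 phi1 o i = xin1 phi1 o' i /\ xin2 phi2 o i = xin2 phi2 o' i) ->
  forall o d, pmfRV p (fun w => (U w, Zat i w)) (U o, d) =
    pmfRV p U (U o) * feedback_law (xin1 phi1 o i) (xin2 phi2 o i) d.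
Proof.
move=> U_prefix U_det o d; rewrite !pmfRV_codeE big_distrl.
apply: eq_bigr => -[a b] _ /=; rewrite Rmult_assoc; congr (_ * _).
pose g t := if U ((a, b), t) == U o then 1 else 0.
pose ind (v : V) := if (v.1.2, v.2) == d then 1 else 0.
have g_prefix t t' : eq_upto i t t' -> g t = g t' by move=> /U_prefix tt'; rewrite /g tt'.
transitivity (\big[Rplus/R0]_(t : trj)
  (g t * ind (t i) * \big[Rmult/R1]_(j : 'I_n) channel_step j a b t)).
  apply: eq_bigr => t _; rewrite /g /ind /Zat /= xpair_eqE.
  by congr (_ * _); case: (U _ == U o); case: (_ == d) => /=; ring.
rewrite (sum_marginalize v0 a b (k := i.+1)) //; last first.
  move=> t t' tt'; rewrite (g_prefix t t') ?(tt' i) //.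
  exact: eq_upto_le tt'.
rewrite (sum_fixed_peel v0) // (sum_marginalize v0 a b (k := i)) ?(ltnW (ltn_ord i)) //.
rewrite big_distrl /=; apply: eq_big => [//|t _].
rewrite /g; case: eqP => [/U_det [<- <-] | _]; last by ring.
rewrite Rmult_1_l; congr (_ * _); rewrite /feedback_law [RHS]big_mkcond.
by apply: eq_bigr => v _; rewrite channel_step_tset /ind; case: ifP; rewrite ?Rmult_1_l ?Rmult_0_l.
Qed.

Lemma pmfRV_msgs (v0 : V) (T : finType) (U : Om -> T) u (P : pred ('I_M1 * 'I_M2)) :
  (forall o, (U o == u) = P o.1) ->
  pmfRV p U u = \big[Rplus/R0]_(ab | P ab) msg_mass.
Proof.
move=> UP; rewrite pmfRV_codeE [RHS]big_mkcond; apply: eq_bigr => -[a b] _ /=.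
under eq_bigr do rewrite UP /=.
case: ifP => _; last by rewrite big1 ?Rmult_0_r // => t _; rewrite Rmult_0_l.
rewrite (sum_marginalize v0 a b (k := 0)) // (eq_bigl _ _ (fixed_from0 v0)).
by rewrite big_pred1_eq big_pred0 // Rmult_1_l Rmult_1_r.
Qed.

Lemma sum_msgs_pred (P1 : pred 'I_M1) (P2 : pred 'I_M2) c :
  \big[Rplus/R0]_(ab : 'I_M1 * 'I_M2 | P1 ab.1 && P2 ab.2) c = INR #|P1| * INR #|P2| * c.
Proof.
rewrite -(pair_big_dep P1 (fun _ => P2) (fun _ _ => c)) /=.
by under eq_bigr do rewrite sumR_const; rewrite sumR_const Rmult_assoc.
Qed.

Definition cmi_msgs (k : nat) : R := cmi p (fun o : Om => o.1.1) (fun o => o.1.2) (Zprefix k).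

Lemma cmi_msgs0 (v0 : V) : cmi_msgs 0 = 0.
Proof.
have Zprefix0 o : Zprefix 0 o = [ffun=> None] by apply/ffunP => j; rewrite !ffunE.
apply: (cmi_eq0 codePmf_ge0) => w _.
rewrite (pmfRV_msgs v0 (P := fun ab => pred1 w.1.1 ab.1 && pred1 w.1.2 ab.2)); last first.
  by move=> o; rewrite !Zprefix0 !xpair_eqE eqxx andbT.
rewrite (pmfRV_msgs v0 (P := fun ab => predT ab.1 && predT ab.2)); last first.
  by move=> o; rewrite !Zprefix0 eqxx.
rewrite (pmfRV_msgs v0 (P := fun ab => pred1 w.1.1 ab.1 && predT ab.2)); last first.
  by move=> o; rewrite !Zprefix0 !xpair_eqE eqxx !andbT.
rewrite (pmfRV_msgs v0 (P := fun ab => predT ab.1 && pred1 w.1.2 ab.2)); last first.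
  by move=> o; rewrite !Zprefix0 !xpair_eqE eqxx !andbT.
by rewrite !sum_msgs_pred; ring.
Qed.

Lemma cmi_msgs_step (v0 : V) (i : 'I_n) :
  cmi_msgs i.+1 - cmi_msgs i <=
  cmi p (xin1 phi1 ^~ i) (xin2 phi2 ^~ i) (fun o => (Zat i o, Zprefix i o)) -
  cmi p (xin1 phi1 ^~ i) (xin2 phi2 ^~ i) (Zprefix i).
Proof.
rewrite /cmi_msgs (cmi_eq_cond _ _ _ (ZprefixS i)).
apply: (cmi_step_le codePmf_ge0 (q := fun o => feedback_law (xin1 phi1 o i) (xin2 phi2 o i))).
- by move=> o o'; apply: xin1_det.
- by move=> o o'; apply: xin2_det.
- apply: (pmfRV_feedback_markov v0 (U := fun o => (o.1.1, o.1.2, Zprefix i o))).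
    by move=> a b t t' /Zprefix_eq_upto ->.
  by move=> o o' [e1 e2 eP]; split; [apply: xin1_det | apply: xin2_det].
- apply: (pmfRV_feedback_markov v0 (U := fun o => (xin1 phi1 o i, xin2 phi2 o i, Zprefix i o))).
    move=> a b t t' tt'; rewrite /xin1 /xin2 /= (past1_eq_upto tt') (past2_eq_upto tt').
    by rewrite (Zprefix_eq_upto _ _ tt').
  by move=> o o' [].
Qed.

Lemma sum_cmi_feedback_le (v0 : V) :
  \big[Rplus/R0]_(i : 'I_n) cmi p (xin1 phi1 ^~ i) (xin2 phi2 ^~ i) (Zprefix i) <=
  \big[Rplus/R0]_(i : 'I_n)
    cmi p (xin1 phi1 ^~ i) (xin2 phi2 ^~ i) (fun o => (Zat i o, Zprefix i o)).
Proof.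
have := sumR_le (fun i (_ : true) => cmi_msgs_step v0 i).
rewrite (sumR_telescope cmi_msgs) (cmi_msgs0 v0) sumR_sub.
have := cmi_ge0 codePmf_ge0 (fun o : Om => o.1.1) (fun o => o.1.2) (Zprefix n).
rewrite -/(cmi_msgs n).
(* Name the sums: lra does not identify their two convertible elaborations. *)
set lhs := \big[Rplus/R0]_(i < n) cmi p _ _ (Zprefix i).
set rhs := \big[Rplus/R0]_(i < n) cmi p _ _ (fun o => _).
lra.
Qed.

Lemma sum_condMI_feedback_le (v0 : V) :
  \big[Rplus/R0]_(i : 'I_n) condMI p (xin1 phi1 ^~ i) (xin2 phi2 ^~ i) (Zprefix i) <=
  \big[Rplus/R0]_(i : 'I_n)
    condMI p (xin1 phi1 ^~ i) (xin2 phi2 ^~ i) (fun o => (Zat i o, Zprefix i o)).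
Proof.
under eq_bigr do rewrite (condMI_cmi codePmf_ge0).
under [in X in _ <= X]eq_bigr do rewrite (condMI_cmi codePmf_ge0).
rewrite /Rdiv -!big_distrl /=; apply: Rmult_le_compat_r; last exact: sum_cmi_feedback_le.
by left; apply/Rinv_0_lt_compat/ln2_gt0.
Qed.

End CodeModel.

Close Scope R_scope.

Theorem mainTheorem4 (M1 M2 n : nat) (S Y Z1 Z2 X1 X2 : finType)
    (PS : S -> R) (W : X1 -> X2 -> S -> Y -> Z1 -> Z2 -> R)
    (phi1 : 'I_n -> 'I_M1 -> seq Z1 -> X1)
    (phi2 : 'I_n -> 'I_M2 -> seq Z2 -> X2) :
  (0 < M1)%N -> (0 < M2)%N ->
  (forall s, (0 <= PS s)%R) -> Rsum PS = 1%R ->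
  (forall x1 x2 s y z1 z2, (0 <= W x1 x2 s y z1 z2)%R) ->
  (forall x1 x2 s,
     Rsum (fun yz : Y * Z1 * Z2 => W x1 x2 s yz.1.1 yz.1.2 yz.2) = 1%R) ->
  let p := codePmf PS W phi1 phi2 in
  (\big[Rplus/R0]_(i : 'I_n)
      condMI p (fun o => xin1 phi1 o i) (fun o => xin2 phi2 o i) (Zpast i)
   <= \big[Rplus/R0]_(i : 'I_n)
      condMI p (fun o => xin1 phi1 o i) (fun o => xin2 phi2 o i)
        (fun o => (Zat i o, Zpast i o)))%R.
Proof.
(* If S * Y * Z1 * Z2 is empty and n > 0,
   the sample space is empty. *)
move=> _ _ PS_ge0 PS_sum1 W_ge0 W_sum1 p.
have [v0 _ | noV] := pickP (fun _ : S * Y * Z1 * Z2 => true).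
  exact: (sum_condMI_feedback_le phi1 phi2 PS_ge0 PS_sum1 W_ge0 W_sum1 v0).
apply: sumR_le => i _; rewrite !condMI_empty; first exact: Rle_refl.
all: by move=> o; have := noV (o.2 i).
Qed.
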